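(* Assume the ground-truth assumption holds for $f^*$, $\mathcal K$ and $K$. Then for any $f_{\mathrm{teacher}}\in\mathcal H$, any $T>0$ and any integer $S\ge K$, the predictor $f_T=\mathcal T^{\mathcal K}_T(f_{\mathrm{teacher}})$ satisfies $$\mathcal L(f_T)\ \le\ \mathcal L(f_{\mathrm{teacher}})+\frac{e^{-\lambda_KT}}{2-e^{-\lambda_KT}}\|f^*\|_{\mathcal D}^2-\big(1-\lambda_{S+1}^2T^2\big)\sum_{k\ge S+1}\langle f_{\mathrm{teacher}},e_k\rangle_{\mathcal D}^2 .$$
   Context: $\mathcal D$ is a probability distribution on an input space $\mathcal X$; $\langle f,g\rangle_{\mathcal D}=\mathbb E_{x\sim\mathcal D}[f(x)g(x)]$, $\|f\|_{\mathcal D}^2=\langle f,f\rangle_{\mathcal D}$. For a target $f^*\in L^2(\mathcal D)$, $\mathcal L(f)=\mathbb E_{x\sim\mathcal D}[(f(x)-f^*(x))^2]$. $\mathcal K$ is a p.s.d. kernel with $\mathcal K(x,x')=\sum_{k\ge1}\lambda_ke_k(x)e_k(x')$, $\lambda_1\ge\lambda_2\ge\dots\ge0$, $\langle e_i,e_j\rangle_{\mathcal D}=\delta_{ij}$; $\mathcal H$ is the closed span of $\{e_k\}$ in $L^2(\mathcal D)$, and $f^*\in\mathcal H$. For $f\in\mathcal H$, $\mathcal T^{\mathcal K}_t(f)=\sum_k(1-e^{-\lambda_kt})\langle f,e_k\rangle_{\mathcal D}e_k$. Ground-truth assumption (for a positive integer $K$): $\langle f^*,e_k\rangle_{\mathcal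 D}=0$ for all $k>K$, and $\langle f^*,e_k\rangle_{\mathcal D}=0$ for every $k\le K$ with $\lambda_k=0$. *)

From mathcomp Require Import all_boot all_order all_algebra.
From mathcomp Require Import all_classical all_reals all_analysis.
Set Implicit Arguments. Unset Strict Implicit. Unset Printing Implicit Defensive.
Import Order.TTheory GRing.Theory Num.Theory.
Local Open Scope ring_scope.
Local Open Scope classical_set_scope.

Section defs.
Context {d : measure_display} {T : measurableType d} {R : realType}.
Variable P : probability T R.

Definition L2 (f : T -> R) : Prop :=
  measurable_fun setT f /\ P.-integrable setT (fun x => ((f x) ^+ 2)%:E).

Definition ip (f g : T -> R) : R := Rintegral P setT (fun x => f x * g x).

Definition nrm2 (f : T -> R) : R := ip f f.

(* finite combination  sum_{1 <= k < n} c_k e_k  (eigenfunctions are indexed from 1) *)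
Definition partial (c : nat -> R) (e : nat -> T -> R) (n : nat) : T -> R :=
  fun x => \sum_(1 <= k < n) c k * e k x.

(* f belongs to H = closed span of {e_k, k >= 1} in L^2(D):
   f is in L^2 and is an L^2-limit of finite linear combinations of the e_k *)
Definition in_H (e : nat -> T -> R) (f : T -> R) : Prop :=
  L2 f /\ forall eps : R, 0 < eps ->
    exists (n : nat) (c : nat -> R), nrm2 (fun x => f x - partial c e n x) < eps.

Definition loss (fstar f : T -> R) : R :=
  Rintegral P setT (fun x => (f x - fstar x) ^+ 2).

(* g represents T^K_t(f) = sum_k (1 - e^{-lambda_k t}) <f,e_k> e_k,
   the series being understood as an L^2(D)-limit *)
Definition is_TK (lam : nat -> R) (e : nat -> T -> R) (t : R) (f g : T -> R) : Prop :=
  L2 g /\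
  (fun n => nrm2 (fun x => g x -
     partial (fun k => (1 - expR (- (lam k * t))) * ip f (e k)) e n x)) @ \oo --> 0.

End defs.

Definition tail_sum {R : realType} (u : nat -> R) (m : nat) : R :=
  limn (fun n => \sum_(m <= k < n) u k).

From mathcomp Require Import all_boot all_order all_algebra.
From mathcomp Require Import all_classical all_reals all_analysis.
From mathcomp Require Import ring lra.
Set Implicit Arguments. Unset Strict Implicit. Unset Printing Implicit Defensive.
Import Order.TTheory GRing.Theory Num.Theory.
Import numFieldNormedType.Exports measurable_realfun.
Local Open Scope ring_scope.
Local Open Scope classical_set_scope.

(* Let [v] be the projection of [f*] on [e_1, ..., e_K].  Since [f*] lies in
   the closed span of the [e_k] and has no other coefficients, [f* - v] is
   null, so [L(f) = ||f - v||^2].  In coordinates the filter multiplies the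
   teacher's coefficient [a_k] by [1 - q_k], [q_k = exp (- lam_k T)], and, with
   [b_k] the coefficients of [f*]:
   - for [k <= K], completing the square gives
     [((1 - q) a - b)^2 <= (a - b)^2 + q / (2 - q) b^2], and [q_k <= q_K];
   - for [k > S], [b_k = 0] and [(1 - q_k)^2 <= (lam_(S+1) T)^2] because
     [1 - exp (- x) <= x];
   - for [K < k <= S] the coefficient only shrinks.
   Summing and applying Bessel's inequality to [f_teacher - v] bounds
   [||g_n - v||^2] for the partial sums [g_n] of the series defining [f_T], and
   the bound passes to [f_T] in the limit. *)

Lemma ler_of_forall_mul1D (R : realFieldType) (x y : R) :
  (forall eps, 0 < eps -> x <= (1 + eps) * y) -> x <= y.
Proof.
move=> xy; apply/ler_addgt0Pr => r r_gt0.
have [y_le0|y_gt0] := lerP y 0; first by have := xy 1 ltr01; lra.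
have := xy (r / y) (divr_gt0 r_gt0 y_gt0).
by rewrite mulrDl mul1r mulfVK ?gt_eqF.
Qed.

Section L2_inner_product.
Context {d : measure_display} {T : measurableType d} {R : realType}.
Variable P : probability T R.
Implicit Types (f g h : T -> R) (a b : R).

Lemma L2_lin f g a b : L2 P f -> L2 P g -> L2 P (fun x => a * f x + b * g x).
Proof.
move=> [mf intf] [mg intg]; split.
  by apply: measurable_funD; apply: measurable_funM => //; exact: measurable_cst.
apply: (@le_integrable _ _ _ P setT _ _
  ((fun x => (2 * a ^+ 2)%:E * ((f x)^+2)%:E) \+
   (fun x => (2 * b ^+ 2)%:E * ((g x)^+2)%:E))%E) => //.
- apply/measurable_EFinP; apply: measurable_funX.
  by apply: measurable_funD; apply: measurable_funM => //; exact: measurable_cst.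
- move=> x _ /=; rewrite lee_fin.
  have h1 : 0 <= 2 * a ^+ 2 * f x ^+ 2 + 2 * b ^+ 2 * g x ^+ 2.
    by have := sqr_ge0 a; have := sqr_ge0 b; have := sqr_ge0 (f x);
       have := sqr_ge0 (g x); nra.
  rewrite (ger0_norm h1) ger0_norm ?sqr_ge0 //.
  by have := sqr_ge0 (a * f x - b * g x); rewrite !expr2; nra.
- by apply: integrableD => //; apply: integrableZl.
Qed.

Lemma L2D f g : L2 P f -> L2 P g -> L2 P (fun x => f x + g x).
Proof. by move=> Lf Lg; have := L2_lin 1 1 Lf Lg; under eq_fun do rewrite !mul1r. Qed.

Lemma L2B f g : L2 P f -> L2 P g -> L2 P (fun x => f x - g x).
Proof.
by move=> Lf Lg; have := L2_lin 1 (-1) Lf Lg; under eq_fun do rewrite mul1r mulN1r.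
Qed.

Lemma L2Z f a : L2 P f -> L2 P (fun x => a * f x).
Proof. by move=> Lf; have := L2_lin a 0 Lf Lf; under eq_fun do rewrite mul0r addr0. Qed.

Lemma L2_sum (s : seq nat) (F : nat -> T -> R) :
  (forall i, i \in s -> L2 P (F i)) -> L2 P (fun x => \sum_(i <- s) F i x).
Proof.
elim: s => [_|i s IH LF].
  split; first by under eq_fun do rewrite big_nil; exact: measurable_cst.
  apply: eq_integrable (integrable0 P setT) => //= x _.
  by rewrite big_nil expr0n.
under eq_fun do rewrite big_cons.
apply: L2D; first exact/LF/mem_head.
by apply: IH => j sj; apply: LF; rewrite in_cons sj orbT.
Qed.

Lemma L2_integrableM f g :
  L2 P f -> L2 P g -> P.-integrable setT (EFin \o (fun x => f x * g x)).
Proof.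
move=> [mf intf] [mg intg].
apply: (@le_integrable _ _ _ P setT _ _
  ((fun x => ((f x)^+2)%:E) \+ (fun x => ((g x)^+2)%:E))%E) => //.
- by apply/measurable_EFinP; apply: measurable_funM.
- move=> x _ /=; rewrite lee_fin [X in _ <= X]ger0_norm ?addr_ge0 ?sqr_ge0 //.
  have := sqr_ge0 (f x - g x); have := sqr_ge0 (f x + g x).
  by rewrite ler_norml !expr2 => ? ?; apply/andP; split; nra.
- exact: integrableD.
Qed.

Lemma ipC f g : ip P f g = ip P g f.
Proof. by apply: eq_Rintegral => x _; rewrite mulrC. Qed.

Lemma ip_lin f g h a b : L2 P f -> L2 P g -> L2 P h ->
  ip P (fun x => a * f x + b * g x) h = a * ip P f h + b * ip P g h.
Proof.
move=> Lf Lg Lh; rewrite /ip.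
under eq_Rintegral do rewrite mulrDl -!mulrA.
have intZ c u : L2 P u ->
    P.-integrable setT (EFin \o (fun x => c * (u x * h x))).
  move=> Lu; have := integrableZl measurableT c (L2_integrableM Lu Lh).
  by apply: eq_integrable => // x _ /=; rewrite EFinM.
by rewrite RintegralD ?intZ // !RintegralZl //; exact: L2_integrableM.
Qed.

Lemma ipD f g h : L2 P f -> L2 P g -> L2 P h ->
  ip P (fun x => f x + g x) h = ip P f h + ip P g h.
Proof.
move=> Lf Lg Lh; have := ip_lin 1 1 Lf Lg Lh; rewrite !mul1r.
by under eq_fun do rewrite !mul1r.
Qed.

Lemma ipB f g h : L2 P f -> L2 P g -> L2 P h ->
  ip P (fun x => f x - g x) h = ip P f h - ip P g h.
Proof.
move=> Lf Lg Lh; have := ip_lin 1 (-1) Lf Lg Lh; rewrite mul1r mulN1r.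
by under eq_fun do rewrite mul1r mulN1r.
Qed.

Lemma ipZ f h a : L2 P f -> L2 P h -> ip P (fun x => a * f x) h = a * ip P f h.
Proof.
move=> Lf Lh; have := ip_lin a 0 Lf Lf Lh; rewrite mul0r addr0.
by under eq_fun do rewrite mul0r addr0.
Qed.

Lemma ip_sum (s : seq nat) (F : nat -> T -> R) h :
  (forall i, i \in s -> L2 P (F i)) -> L2 P h ->
  ip P (fun x => \sum_(i <- s) F i x) h = \sum_(i <- s) ip P (F i) h.
Proof.
elim: s => [_ Lh|i s IH LF Lh].
  rewrite big_nil /ip; under eq_Rintegral do rewrite big_nil mul0r.
  by rewrite Rintegral_cst // mul0r.
have LFs j : j \in s -> L2 P (F j) by move=> sj; apply: LF; rewrite in_cons sj orbT.
under eq_fun do rewrite big_cons.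
by rewrite big_cons ipD ?IH //; [exact/LF/mem_head | exact: L2_sum].
Qed.

Lemma nrm2_ge0 f : 0 <= nrm2 P f.
Proof. by apply: Rintegral_ge0 => x _; rewrite -expr2 sqr_ge0. Qed.

Lemma nrm2D f g : L2 P f -> L2 P g ->
  nrm2 P (fun x => f x + g x) = nrm2 P f + 2 * ip P f g + nrm2 P g.
Proof.
move=> Lf Lg; rewrite /nrm2 ipD //; last exact: L2D.
by rewrite (ipC f) (ipC g) !ipD // (ipC f g); ring.
Qed.

Lemma nrm2B f g : L2 P f -> L2 P g ->
  nrm2 P (fun x => f x - g x) = nrm2 P f - 2 * ip P f g + nrm2 P g.
Proof.
move=> Lf Lg; rewrite /nrm2 ipB //; last exact: L2B.
by rewrite (ipC f) (ipC g) !ipB // (ipC f g); ring.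
Qed.

Lemma nrm2DZ f g a : L2 P f -> L2 P g ->
  nrm2 P (fun x => f x + a * g x) = nrm2 P f + 2 * a * ip P f g + a ^+ 2 * nrm2 P g.
Proof.
move=> Lf Lg; rewrite nrm2D //; last exact: L2Z.
rewrite /nrm2 (ipC f) !ipZ //; last exact: L2Z.
by rewrite (ipC g (fun x => a * g x)) ipZ // (ipC g f); ring.
Qed.

(* The quadratic [s |-> ||f + s g||^2] is nonnegative and, when [||g|| = 0],
   affine, hence constant. *)
Lemma ip_nrm2_eq0 f g : L2 P f -> L2 P g -> nrm2 P g = 0 -> ip P f g = 0.
Proof.
move=> Lf Lg g0; apply/eqP/negP => /negP fg_neq0.
have := nrm2_ge0 (fun x => f x + (- (nrm2 P f + 1) / (2 * ip P f g)) * g x).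
rewrite nrm2DZ // g0 mulr0 addr0.
have -> : 2 * (- (nrm2 P f + 1) / (2 * ip P f g)) * ip P f g = - (nrm2 P f + 1).
  by field; rewrite fg_neq0.
lra.
Qed.

Lemma nrm2_eq_of_null f g : L2 P f -> L2 P g ->
  nrm2 P (fun x => f x - g x) = 0 -> nrm2 P f = nrm2 P g.
Proof.
move=> Lf Lg fg0; have Lfg := L2B Lf Lg.
have -> : f = (fun x => g x + (f x - g x)) by apply/funext => x; rewrite addrC subrK.
by rewrite nrm2D // fg0 ip_nrm2_eq0 // mulr0 !addr0.
Qed.

Lemma nrm2_subr_null f g h : L2 P f -> L2 P g -> L2 P h ->
  nrm2 P (fun x => g x - h x) = 0 ->
  nrm2 P (fun x => f x - g x) = nrm2 P (fun x => f x - h x).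
Proof.
move=> Lf Lg Lh gh0; symmetry; apply: nrm2_eq_of_null; [exact: L2B|exact: L2B|].
rewrite -gh0; congr (nrm2 P _); apply/funext => x; rewrite opprB addrA; ring.
Qed.

Lemma lossE fstar f : loss P fstar f = nrm2 P (fun x => f x - fstar x).
Proof. by apply: eq_Rintegral => x _; rewrite expr2. Qed.

Lemma nrm2_mulD_le f g eps : 0 < eps -> L2 P f -> L2 P g ->
  eps * nrm2 P (fun x => f x + g x) <= (1 + eps) * nrm2 P f + eps * (1 + eps) * nrm2 P g.
Proof.
move=> eps_gt0 Lf Lg.
have := nrm2_ge0 (fun x => f x + (- eps) * g x).
rewrite nrm2DZ // nrm2D // => h.
have := nrm2_ge0 f; have := nrm2_ge0 g => h1 h2.
by rewrite !expr2 in h; nra.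
Qed.

Lemma nrm2_sub_le_lim f h (g : nat -> T -> R) (B : nat -> R) (b : R) :
  L2 P f -> L2 P h -> (forall n, L2 P (g n)) ->
  (fun n => nrm2 P (fun x => f x - g n x)) @ \oo --> 0 -> B @ \oo --> b ->
  (\forall n \near \oo, nrm2 P (fun x => g n x - h x) <= B n) ->
  nrm2 P (fun x => f x - h x) <= b.
Proof.
move=> Lf Lh Lg fg Bb ghB; apply: ler_of_forall_mul1D => eps eps_gt0.
rewrite -(ler_pM2l eps_gt0).
have bound_cvg : (1 + eps) * nrm2 P (fun x => f x - g n x) + eps * (1 + eps) * B n
    @[n --> \oo] --> eps * ((1 + eps) * b).
  rewrite (_ : eps * ((1 + eps) * b) = (1 + eps) * 0 + eps * (1 + eps) * b); last by ring.
  by apply: cvgD; [exact: cvgMl_tmp fg | exact: cvgMl_tmp Bb].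
apply: (ler_cvg_to (cvg_cst _) bound_cvg); apply: filterS ghB => n ghBn.
have -> : (fun x => f x - h x) = (fun x => (f x - g n x) + (g n x - h x)).
  by apply/funext => x; rewrite addrA subrK.
apply: le_trans (nrm2_mulD_le eps_gt0 (L2B Lf (Lg n)) (L2B (Lg n) Lh)) _.
by rewrite lerD2l ler_wpM2l // mulr_ge0 ?ltW //; lra.
Qed.

End L2_inner_product.

Lemma cvg_tail_sum (R : realType) (u : nat -> R) (m : nat) (M : R) :
  (forall k, 0 <= u k) -> (forall n, \sum_(m <= k < n) u k <= M) ->
  (fun n => \sum_(m <= k < n) u k) @ \oo --> tail_sum u m.
Proof.
move=> u_ge0 uM; apply: nondecreasing_is_cvgn.
  exact: (nondecreasing_series (P := xpredT)).
by exists M => _ [n _ <-]; exact: uM.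
Qed.

Section orthonormal_family.
Context {d : measure_display} {T : measurableType d} {R : realType}.
Variables (P : probability T R) (e : nat -> T -> R).
Hypothesis e_L2 : forall k, (1 <= k)%N -> L2 P (e k).
Hypothesis e_orthonormal :
  forall i j, (1 <= i)%N -> (1 <= j)%N -> ip P (e i) (e j) = (i == j)%:R.
Implicit Types (c : nat -> R) (f w : T -> R).

Lemma partial_widen c m n : (m <= n)%N -> (forall k, (m <= k)%N -> c k = 0) ->
  partial c e n = partial c e m.
Proof.
move=> mn c0; apply/funext => x; rewrite /partial (big_nat_widen _ _ _ _ _ mn).
rewrite [RHS]big_mkcond; apply: eq_bigr => k _.
by case: ltnP => // mk; rewrite c0 ?mul0r.
Qed.

Lemma partialB c c' n :
  (fun x => partial c e n x - partial c' e n x) = partial (fun k => c k - c' k) e n.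
Proof.
by apply/funext => x; rewrite /partial -sumrB; apply: eq_bigr => k _; rewrite mulrBl.
Qed.

Lemma L2_partial c n : L2 P (partial c e n).
Proof.
apply: (L2_sum (F := fun k x => c k * e k x)) => k.
by rewrite mem_index_iota => /andP[k1 _]; exact/L2Z/e_L2.
Qed.

Lemma ip_partial_r w c n : L2 P w ->
  ip P w (partial c e n) = \sum_(1 <= k < n) c k * ip P w (e k).
Proof.
move=> Lw; rewrite ipC ip_sum //; last first.
  by move=> k; rewrite mem_index_iota => /andP[k1 _]; exact/L2Z/e_L2.
rewrite !big_nat; apply: eq_bigr => k /andP[k1 _].
by rewrite ipZ ?(ipC _ (e k)) //; exact: e_L2.
Qed.

Lemma ip_partial_e c n j : (1 <= j)%N ->
  ip P (partial c e n) (e j) = if (j < n)%N then c j else 0.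
Proof.
move=> j1; rewrite ipC (ip_partial_r _ _ (e_L2 j1)).
under eq_big_nat => k /andP[k1 _] do rewrite ipC e_orthonormal //.
case: ifP => jn.
  rewrite (bigD1_seq j) ?iota_uniq ?mem_index_iota ?j1 ?jn //= eqxx mulr1.
  by rewrite big1 ?addr0 // => k /negPf->; rewrite mulr0.
rewrite big_nat big1 // => k /andP[_ kn].
by rewrite (_ : k == j = false) ?mulr0 //; apply: contraTF kn => /eqP ->; rewrite jn.
Qed.

Lemma nrm2_partial c n : nrm2 P (partial c e n) = \sum_(1 <= k < n) c k ^+ 2.
Proof.
rewrite /nrm2 ip_partial_r; last exact: L2_partial.
by rewrite !big_nat; apply: eq_bigr => k /andP[k1 kn]; rewrite ip_partial_e // kn expr2.
Qed.

Lemma bessel w m n : (1 <= m)%N -> L2 P w ->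
  \sum_(m <= k < n) ip P w (e k) ^+ 2 <= nrm2 P w.
Proof.
move=> m1 Lw.
have bessel1 : \sum_(1 <= k < n) ip P w (e k) ^+ 2 <= nrm2 P w.
  have := nrm2_ge0 P (fun x => w x - partial (fun k => ip P w (e k)) e n x).
  rewrite nrm2B //; last exact: L2_partial.
  rewrite nrm2_partial ip_partial_r //.
  under [X in _ - 2 * X]eq_bigr do rewrite -expr2.
  lra.
apply: le_trans bessel1; rewrite (big_nat_widenl _ _ _ _ _ m1) [leLHS]big_mkcond /=.
by apply: ler_sum => k _; case: ifP => _ //; exact: sqr_ge0.
Qed.

Lemma cvg_bessel_tail w m : (1 <= m)%N -> L2 P w ->
  (fun n => \sum_(m <= k < n) ip P w (e k) ^+ 2) @ \oo -->
  tail_sum (fun k => ip P w (e k) ^+ 2) m.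
Proof.
move=> m1 Lw; apply: (cvg_tail_sum (M := nrm2 P w)) => [k|n]; first exact: sqr_ge0.
exact: bessel.
Qed.

Lemma nrm2_sub_partial_eq0 f n : in_H P e f ->
  (forall k, (n <= k)%N -> ip P f (e k) = 0) ->
  nrm2 P (fun x => f x - partial (fun k => ip P f (e k)) e n x) = 0.
Proof.
move=> [Lf f_approx] fn0.
set v := partial _ e n; have Lv : L2 P v := L2_partial _ _.
have Lr := L2B Lf Lv.
have r_orth c m : ip P (partial c e m) (fun x => f x - v x) = 0.
  rewrite ipC ip_partial_r // big_nat big1 // => k /andP[k1 _].
  rewrite ipB ?ip_partial_e //; last exact: e_L2.
  by case: ltnP => kn; rewrite ?subrr ?mulr0 // fn0 // subr0 mulr0.
apply/le_anti; rewrite nrm2_ge0 andbT; apply/ler_addgt0Pr => eps eps_gt0.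
rewrite add0r; have [m [c fc]] := f_approx eps eps_gt0; apply: le_trans (ltW fc).
have Lp := L2_partial c m; have Lvp := L2B Lv Lp.
have -> : (fun x => f x - partial c e m x) =
    (fun x => (f x - v x) + (v x - partial c e m x)).
  by apply/funext => x; rewrite addrA subrK.
rewrite [leRHS]nrm2D // ipC ipB // (r_orth c m) (r_orth _ n).
by have := nrm2_ge0 P (fun x => v x - partial c e m x); lra.
Qed.

End orthonormal_family.

Lemma shrink_sqr_le (R : realFieldType) (q qK a b : R) :
  0 <= q -> q <= qK -> qK <= 1 ->
  ((1 - q) * a - b) ^+ 2 <= (a - b) ^+ 2 + qK / (2 - qK) * b ^+ 2.
Proof.
move=> q_ge0 q_le_qK qK_le1.
have q2_gt0 : 0 < 2 - q by lra.
have qK2_gt0 : 0 < 2 - qK by lra.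
(* completing the square in [a] *)
have square : q / (2 - q) * b ^+ 2 - (((1 - q) * a - b) ^+ 2 - (a - b) ^+ 2)
    = q * ((2 - q) * a - b) ^+ 2 / (2 - q).
  by field; rewrite gt_eqF.
have square_ge0 : 0 <= q * ((2 - q) * a - b) ^+ 2 / (2 - q).
  by apply: divr_ge0; [rewrite mulr_ge0 ?sqr_ge0 | exact: ltW].
have ratio_mono : q / (2 - q) <= qK / (2 - qK).
  rewrite -subr_ge0 (_ : _ - _ = 2 * (qK - q) / ((2 - q) * (2 - qK))); last first.
    by field; rewrite !gt_eqF.
  by apply: divr_ge0; [rewrite mulr_ge0 ?subr_ge0 | rewrite ltW ?mulr_gt0].
have := ler_wpM2r (sqr_ge0 b) ratio_mono; lra.
Qed.

Lemma sum_shrink_sqr_le (R : realFieldType) (q a b : nat -> R) (r : R) (K S n : nat) :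
  (K <= S)%N -> (S < n)%N ->
  (forall k, 0 <= q k) -> (forall k, (1 <= k)%N -> q k <= 1) ->
  (forall k, (1 <= k <= K)%N -> q k <= q K) ->
  (forall k, (S < k)%N -> 1 - q k <= r) ->
  (forall k, (K < k)%N -> b k = 0) ->
  \sum_(1 <= k < n) ((1 - q k) * a k - b k) ^+ 2 <=
    \sum_(1 <= k < n) (a k - b k) ^+ 2
    + q K / (2 - q K) * \sum_(1 <= k < K.+1) b k ^+ 2
    - (1 - r ^+ 2) * \sum_(S.+1 <= k < n) a k ^+ 2.
Proof.
move=> KS Sn q_ge0 q_le1 q_leK q_S b0.
have Kn : (K.+1 <= n)%N by apply: leq_ltn_trans Sn.
rewrite (big_nat_widen _ _ _ _ _ Kn) (big_nat_widenl _ _ _ _ _ (ltn0Sn S)).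
rewrite [X in _ * X]big_mkcond [X in _ - _ * X]big_mkcond /=.
rewrite !mulr_sumr -big_split -sumrB /=.
apply: ler_sum_nat => k /andP[k1 kn].
have [kK|Kk] := leqP k K.
  rewrite ltnS kK ltnNge (leq_trans kK KS) /= mulr0 subr0.
  by apply: shrink_sqr_le; rewrite ?q_leK ?k1 // q_le1 // (leq_trans k1 kK).
rewrite b0 // ltnS leqNgt Kk /= mulr0 addr0 !subr0 exprMn.
have q1 := q_le1 k k1; have := q_ge0 k; have := sqr_ge0 (a k).
case: (ltnP S k) => [Sk|kS] /=; last by rewrite mulr0 subr0 !expr2; nra.
have : (1 - q k) ^+ 2 <= r ^+ 2 by have := q_S k Sk; rewrite !expr2; nra.
by move=> /(ler_wpM2r (sqr_ge0 (a k))); lra.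
Qed.



Lemma sum_expR_filter_sqr_le (R : realType) (lam a b : nat -> R) (t : R)
    (K S n : nat) :
  (forall k, (1 <= k)%N -> 0 <= lam k) ->
  (forall i j, (1 <= i)%N -> (i <= j)%N -> lam j <= lam i) ->
  0 < t -> (K <= S)%N -> (S < n)%N -> (forall k, (K < k)%N -> b k = 0) ->
  \sum_(1 <= k < n) ((1 - expR (- (lam k * t))) * a k - b k) ^+ 2 <=
    \sum_(1 <= k < n) (a k - b k) ^+ 2
    + expR (- (lam K * t)) / (2 - expR (- (lam K * t))) * \sum_(1 <= k < K.+1) b k ^+ 2
    - (1 - lam S.+1 ^+ 2 * t ^+ 2) * \sum_(S.+1 <= k < n) a k ^+ 2.
Proof.
move=> lam_ge0 lam_mono t_gt0 KS Sn b0; rewrite -exprMn.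
apply: (sum_shrink_sqr_le _ KS Sn _ _ _ _ b0) => [k|k k1|k /andP[k1 kK]|k Sk].
- exact/ltW/expR_gt0.
- by rewrite expR_le1 oppr_le0 mulr_ge0 // ?lam_ge0 // ltW.
- by rewrite ler_expR lerN2 ler_wpM2r ?lam_mono // ltW.
- have := ler_wpM2r (ltW t_gt0) (lam_mono _ _ (ltn0Sn S) Sk).
  by have := expR_ge1Dx (- (lam k * t)); lra.
Qed.

Theorem lemma6p2 (d : measure_display) (T : measurableType d) (R : realType)
  (P : probability T R) (lam : nat -> R) (e : nat -> T -> R)
  (fstar : T -> R) (K : nat)
  (he : forall k, (1 <= k)%N -> L2 P (e k))
  (horth : forall i j, (1 <= i)%N -> (1 <= j)%N -> ip P (e i) (e j) = (i == j)%:R)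
  (hlam0 : forall k, (1 <= k)%N -> 0 <= lam k)
  (hlam_mono : forall i j, (1 <= i)%N -> (i <= j)%N -> lam j <= lam i)
  (hfstar : in_H P e fstar)
  (hK : (0 < K)%N)
  (hgt1 : forall k, (K < k)%N -> ip P fstar (e k) = 0)
  (hgt2 : forall k, (1 <= k <= K)%N -> lam k = 0 -> ip P fstar (e k) = 0)
  (fteacher : T -> R) (hteach : in_H P e fteacher)
  (t : R) (ht : 0 < t) (S : nat) (hS : (K <= S)%N)
  (fT : T -> R) (hfT : is_TK P lam e t fteacher fT) :
  loss P fstar fT <=
    loss P fstar fteacher
    + expR (- (lam K * t)) / (2 - expR (- (lam K * t))) * nrm2 P fstar
    - (1 - lam S.+1 ^+ 2 * t ^+ 2) * tail_sum (fun k => ip P fteacher (e k) ^+ 2) S.+1.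
Proof.
have [[Lfs _] [Lft _]] := (hfstar, hteach); have [LfT fT_cvg] := hfT.
pose a k := ip P fteacher (e k); pose b k := ip P fstar (e k).
pose v := partial b e K.+1; have Lv : L2 P v := L2_partial he b K.+1.
have fstar_v : nrm2 P (fun x => fstar x - v x) = 0.
  exact: (nrm2_sub_partial_eq0 he horth hfstar hgt1).
have nrm2_fstar : nrm2 P fstar = \sum_(1 <= k < K.+1) b k ^+ 2.
  by rewrite (nrm2_eq_of_null Lfs Lv fstar_v) nrm2_partial.
have teacher_v k : (1 <= k)%N -> ip P (fun x => fteacher x - v x) (e k) = a k - b k.
  move=> k1; rewrite ipB ?ip_partial_e //; last exact: he.
  by case: ltnP => // Kk; rewrite /b hgt1.
have step n : (S < n)%N ->
    nrm2 P (fun x => partial (fun k => (1 - expR (- (lam k * t))) * a k) e n x - v x)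
    <= nrm2 P (fun x => fteacher x - v x)
    + expR (- (lam K * t)) / (2 - expR (- (lam K * t))) * nrm2 P fstar
    - (1 - lam S.+1 ^+ 2 * t ^+ 2) * \sum_(S.+1 <= k < n) a k ^+ 2.
  move=> Sn; have vn : v = partial b e n.
    by symmetry; apply: partial_widen; [exact: leq_ltn_trans hS Sn | exact: hgt1].
  rewrite {1}vn partialB (nrm2_partial he horth) nrm2_fstar.
  apply: le_trans (sum_expR_filter_sqr_le a hlam0 hlam_mono ht hS Sn hgt1) _.
  rewrite lerD2r lerD2r; apply: le_trans (bessel he horth _ (leqnn 1) (L2B Lft Lv)).
  by rewrite !big_nat; apply: ler_sum => k /andP[k1 _]; rewrite teacher_v.
rewrite !lossE (nrm2_subr_null LfT Lfs Lv fstar_v) (nrm2_subr_null Lft Lfs Lv fstar_v).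
apply: (nrm2_sub_le_lim LfT Lv (fun n => L2_partial he _ n) fT_cvg
  (B := fun n => _ - _ * \sum_(S.+1 <= k < n) a k ^+ 2)); last first.
  by exists S.+1 => // n; exact: step.
apply: cvgB; first exact: cvg_cst.
by apply: cvgMl_tmp; exact: (cvg_bessel_tail he horth (ltn0Sn S) Lft).
Qed.
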